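(* There exist constants $\delta>0$, $c>0$, $C>0$ and $N_0$ such that for every prime $N\ge N_0$: (i) there exists an integer $b\in[1,W)$ with $\gcd(b,W)=1$ such that $\frac1N\sum_{n=0}^{N-1}f_b(n)\ge\delta$; (ii) for every integer $b\in[1,W)$ with $\gcd(b,W)=1$ and every $n\in\{0,\dots,N-1\}$, one has $0\le f_b(n)\le c\,\nu_b(n)$ and $f_b(n)\le C\log N$.
   Context: Fix a $C^\infty$ function $\chi:\mathbb{R}\to[0,\infty)$ supported in $[-1,1]$ with $\chi(0)>0$ and $\int_0^\infty\chi'(x)^2\,dx=1$. Fix $\alpha\in(0,1/2)$. For a prime $N$ (large), let $w=w(N)=\lfloor\log\log N\rfloor$, $W=\prod_{p\le w,\ p\text{ prime}}p$, $R=N^\alpha$. $\mu$ is the Möbius function ($\mu(1)=1$, $\mu(d)=(-1)^\ell$ if $d$ is a product of $\ell$ distinct primes, $0$ otherwise) and $\phi$ is Euler's totient function. Set $\lambda(n)=\sum_{d\mid n,\ d\ge1}\mu(d)\chi\bigl(\frac{\log d}{\log R}\bigr)$ for integers $n\ge1$. For an integer $b$, define on $\{0,\dots,N-1\}$: $f_b(n)=\frac{\phi(W)}{W}\log(Wn+b)$ if $Wn+b\ge R$ and $Wn+b$ is prime, and $f_b(n)=0$ otherwise; and $\nu_b(n)=\frac{\phi(W)}{W}\log R\cdot\lambda(Wn+b)^2$. *)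

From Stdlib Require Import Reals.
From Coquelicot Require Import Coquelicot.
From mathcomp Require Import ssreflect ssrfun ssrbool eqtype ssrnat seq div prime bigop.

Open Scope R_scope.

Definition squarefreeb (d : nat) : bool :=
  all (fun p => logn p d == 1%N) (primes d).

Definition moebius (d : nat) : R :=
  if squarefreeb d then (-1) ^ (size (primes d)) else 0.

Definition w_of (N : nat) : nat := Z.to_nat (Int_part (ln (ln (INR N)))).

Definition W_of (N : nat) : nat := \prod_(0 <= p < (w_of N).+1 | prime p) p.

Definition R_of (alpha : R) (N : nat) : R := Rpower (INR N) alpha.

Definition phiW_over_W (N : nat) : R := INR (totient (W_of N)) / INR (W_of N).

Definition lambda_ (chi : R -> R) (alpha : R) (N : nat) (n : nat) : R :=
  \big[Rplus/0]_(d <- divisors n)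
     (moebius d * chi (ln (INR d) / ln (R_of alpha N))).

Definition f_b (alpha : R) (N b n : nat) : R :=
  let m := (W_of N * n + b)%N in
  if Rle_dec (R_of alpha N) (INR m) then
    (if prime m then phiW_over_W N * ln (INR m) else 0)
  else 0.

Definition nu_b (chi : R -> R) (alpha : R) (N b n : nat) : R :=
  phiW_over_W N * ln (R_of alpha N) * (lambda_ chi alpha N (W_of N * n + b)%N) ^ 2.

(* Part (ii): a prime m = W n + b >= R has only the divisors 1 and m, and
   log m / log R >= 1 puts the second one outside the support of chi, so
   lambda(m) = chi(0) and nu_b(n) = (phi(W)/W) alpha log N chi(0)^2; on the
   other hand f_b(n) <= (phi(W)/W) log (W N), and W <= (w+1)^(w+1) with
   w <= log log N gives log W <= 4 log N.
   Part (i): summing f_b over the phi(W) reduced residues b < W gives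
   (phi(W)/W) times the sum of log p over the primes R <= p < W N coprime to W,
   which is at least theta(W N) - theta(sqrt N + 1) because R and w are both
   below sqrt N.  Chebyshev's bound theta(M) >= M/5, obtained from
   2^n <= C(2n, n) and the fact that every prime power exactly dividing
   C(2n, n) is at most 2n, makes this at least phi(W) N / 10, so some residue
   class has average at least 1/10. *)

From HB Require Import structures.
From Stdlib Require Import Reals ZArith Lra Lia.
From Coquelicot Require Import Coquelicot.
From mathcomp Require Import ssreflect ssrfun ssrbool eqtype ssrnat seq div prime bigop binomial.
From mathcomp Require Import zify.

Set Implicit Arguments.
Unset Strict Implicit.
Unset Printing Implicit Defensive.

Open Scope R_scope.

Lemma RplusA : associative Rplus. Proof. by move=> *; rewrite Rplus_assoc. Qed.
HB.instance Definition _ := Monoid.isComLaw.Build R 0 Rplus RplusA Rplus_comm Rplus_0_l.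

Section NatFacts.
Local Open Scope nat_scope.

Lemma sum_leq_le (K m : nat) : \sum_(1 <= k < m) (k <= K) <= K.
Proof.
rewrite (eq_bigr (fun k => if k <= K then 1 else 0)) => [|k _]; last by case: leqP.
rewrite -big_mkcond sum1_count -size_filter.
rewrite -[X in _ <= X](size_iota 1 K); apply: uniq_leq_size.
  exact/filter_uniq/iota_uniq.
move=> k; rewrite mem_filter mem_index_iota mem_iota => /andP[kK /andP[k1 _]].
by rewrite k1 /=; lia.
Qed.

Lemma logn_central_binomial p n :
  logn p 'C(n.*2, n) + (logn p n`!).*2 = logn p (n.*2)`!.
Proof.
have fact_eq : 'C(n.*2, n) * (n`! * n`!) = (n.*2)`!.
  by have := bin_fact (leq_addr n n); rewrite addnK addnn.
have C_gt0 : 0 < 'C(n.*2, n) by rewrite bin_gt0 -addnn leq_addr.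
by rewrite -fact_eq lognM ?muln_gt0 ?fact_gt0 // lognM ?fact_gt0 // addnn.
Qed.

(* Each Legendre term [2n %/ p^k - 2 (n %/ p^k)] is 0 or 1, and 0 once [p^k > 2n]. *)
Lemma logn_central_binomial_le p n :
  prime p -> 0 < n -> p ^ logn p 'C(n.*2, n) <= n.*2.
Proof.
move=> p_prime n_gt0; have p_gt1 := prime_gt1 p_prime.
set K := trunc_log p n.*2.
have pK_le : p ^ K <= n.*2 by apply: trunc_logP; rewrite ?double_gt0.
suff vK : logn p 'C(n.*2, n) <= K.
  by apply: leq_trans pK_le; rewrite leq_exp2l.
have := logn_central_binomial p n; rewrite !logn_fact //.
have widen : \sum_(1 <= k < n.+1) n %/ p ^ k = \sum_(1 <= k < n.*2.+1) n %/ p ^ k.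
  rewrite [RHS](big_cat_nat _ (_ : n.+1 <= n.*2.+1)) //=; last by lia.
  rewrite [X in _ = _ + X]big1_seq ?addn0 // => k /andP[_].
  rewrite mem_index_iota => /andP[nk _]; apply/divn_small.
  by apply: leq_trans nk _; apply/ltnW/ltn_expl.
have termwise : \sum_(1 <= k < n.*2.+1) n.*2 %/ p ^ k <=
    \sum_(1 <= k < n.*2.+1) ((n %/ p ^ k).*2 + (k <= K)).
  apply: leq_sum => k _; have pk_gt0 : 0 < p ^ k by rewrite expn_gt0 ltnW.
  case: (leqP k K) => kK.
    rewrite addn1; have := ltn_ceil n pk_gt0; set q := n %/ p ^ k.
    by move=> n_lt; rewrite -ltnS ltn_divLR //; nia.
  rewrite divn_small ?leq0n //; apply: leq_trans (trunc_log_ltn _ p_gt1) _.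
  by rewrite leq_exp2l.
rewrite big_split /= in termwise.
rewrite widen => legendre; have := sum_leq_le K n.*2.+1.
rewrite -(big_morph double doubleD (erefl 0%N : 0.*2 = 0)) in termwise; lia.
Qed.

Lemma central_binomial_ge n : 2 ^ n <= 'C(n.*2, n).
Proof.
elim: n => [|n IH]; first by rewrite bin0.
rewrite doubleS binS.
have sym : 'C(n.*2.+1, n.+1) = 'C(n.*2.+1, n).
  by rewrite -(bin_sub (_ : n.+1 <= n.*2.+1)); [congr binomial|]; lia.
have : 'C(n.*2, n) <= 'C(n.*2.+1, n) by apply: leq_bin2l.
by rewrite sym expnS; lia.
Qed.

Lemma coprime_mulDl k m n : coprime (k * m + n) m = coprime n m.
Proof. by rewrite /coprime gcdnC gcdnMDl gcdnC. Qed.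

Lemma big_coprime_residues (T : Type) (idx : T) (op : Monoid.com_law idx) W N (F : nat -> T) :
  \big[op/idx]_(0 <= b < W | coprime b W) \big[op/idx]_(0 <= n < N) F (W * n + b)
  = \big[op/idx]_(0 <= m < W * N | coprime m W) F m.
Proof.
rewrite exchange_big_nat [W * N]mulnC [RHS]big_mkcond big_nat_mul; apply: eq_bigr => n _.
rewrite -[n * W]add0n big_addn mulSn addnK [LHS]big_mkcond.
by apply: eq_bigr => b _; rewrite [b + _]addnC coprime_mulDl mulnC.
Qed.

Definition primorial w := \prod_(0 <= p < w.+1 | prime p) p.

Lemma primorial_gt0 w : 0 < primorial w.
Proof. by apply: prodn_cond_gt0 => p /prime_gt0. Qed.

Lemma primorial_ge2 w : 2 <= w -> 2 <= primorial w.
Proof.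
move=> w_ge2; rewrite /primorial big_mkcond (bigD1_seq 2) ?mem_index_iota ?iota_uniq //.
by rewrite /= leq_pmulr //; apply: prodn_cond_gt0 => p _; case: ifP => // /prime_gt0.
Qed.

Lemma primorial_le w : primorial w <= w.+1 ^ w.+1.
Proof.
rewrite /primorial big_mkcond -[X in _ <= _ ^ X](subn0 w.+1) -prod_nat_const_nat.
rewrite big_nat_cond [X in _ <= X]big_nat_cond.
by apply: leq_prod => p /andP[/andP[_ pw] _]; case: prime; lia.
Qed.

Lemma coprime_primorial m w : prime m -> w < m -> coprime m (primorial w).
Proof.
move=> m_prime wm; rewrite /primorial big_seq_cond.
apply: (big_ind (coprime m)) => [|a b ma mb|p /andP[]]; first exact: coprimen1.
  by rewrite coprimeMr ma mb.
rewrite mem_index_iota => /andP[_ pw] p_prime; rewrite prime_coprime //.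
by apply/negP => /(dvdn_leq (prime_gt0 p_prime)); lia.
Qed.

Lemma totient_le n : totient n <= n.
Proof.
rewrite totient_count_coprime -[X in _ <= X]muln1 -[X in X * 1]subn0 -sum_nat_const_nat.
by apply: leq_sum => d _; exact: leq_b1.
Qed.

End NatFacts.

Lemma Rsum_le (I : Type) (r : seq I) (P : pred I) (F G : I -> R) :
  (forall i, P i -> F i <= G i) ->
  \big[Rplus/0]_(i <- r | P i) F i <= \big[Rplus/0]_(i <- r | P i) G i.
Proof. by move=> FG; apply: (big_ind2 Rle) => //; [lra | move=> *; lra]. Qed.

Lemma Rsum_ge0 (I : Type) (r : seq I) (P : pred I) (F : I -> R) :
  (forall i, P i -> 0 <= F i) -> 0 <= \big[Rplus/0]_(i <- r | P i) F i.
Proof. by move=> F0; apply: (big_ind (Rle 0)) => //; [lra | move=> *; lra]. Qed.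

Lemma Rsum_const_nat (P : pred nat) (c : R) n :
  \big[Rplus/0]_(0 <= i < n | P i) c = INR (\sum_(0 <= i < n) P i) * c.
Proof.
rewrite big_mkcond; elim: n => [|n IH]; first by rewrite !big_geq //=; ring.
by rewrite !big_nat_recr //= IH plus_INR; case: (P n) => /=; ring.
Qed.

Lemma Rsum_nat_vanishing (g : nat -> R) a b :
  (forall p, 0 <= g p) -> (forall p, (a <= p)%N -> g p = 0) ->
  \big[Rplus/0]_(0 <= p < b) g p <= \big[Rplus/0]_(0 <= p < a) g p.
Proof.
move=> g_ge0 g_eq0; case: (leqP b a) => ba.
  rewrite [X in _ <= X](big_cat_nat (leq0n b) ba) /=.
  by have := @Rsum_ge0 nat (index_iota b a) xpredT g (fun p _ => g_ge0 p); lra.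
rewrite (big_cat_nat (leq0n a) (ltnW ba)) /= [X in _ + X]big1_seq; first lra.
by move=> p /andP[_]; rewrite mem_index_iota => /andP[ap _]; exact: g_eq0.
Qed.

Lemma ln_prod (I : Type) (r : seq I) (P : pred I) (F : I -> nat) :
  (forall i, (0 < F i)%N) ->
  ln (INR (\prod_(i <- r | P i) F i)) = \big[Rplus/0]_(i <- r | P i) ln (INR (F i)).
Proof.
move=> F_gt0; elim: r => [|x r IH]; first by rewrite !big_nil /= ln_1.
rewrite !big_cons; case: (P x) => //.
rewrite mult_INR ln_mult -?IH //; apply/lt_0_INR/ltP => //.
exact: prodn_cond_gt0.
Qed.

Lemma exists_ge_of_Rsum_le (I : eqType) (r : seq I) (P : pred I) (c : R) (a : I -> R) :
  has P r -> \big[Rplus/0]_(i <- r | P i) c <= \big[Rplus/0]_(i <- r | P i) a i ->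
  exists2 i, (i \in r) && P i & c <= a i.
Proof.
elim: r => [|x r IH] //= has_xr; rewrite !big_cons.
have exists_in_r i : (i \in r) && P i -> c <= a i -> exists2 i, (i \in x :: r) && P i & c <= a i.
  by case/andP=> ir Pi ci; exists i; rewrite // inE ir orbT.
case Px: (P x) => sum_le; last first.
  by rewrite Px /= in has_xr; have [i] := IH has_xr sum_le; exact: exists_in_r.
case: (Rle_lt_dec c (a x)) => [cx|xc]; first by exists x; rewrite ?inE ?eqxx.
case Pr: (has P r).
  by have [|i] := IH Pr; [lra | exact: exists_in_r].
have sum_nil F : \big[Rplus/0]_(i <- r | P i) F i = 0.
  rewrite big_seq_cond big_pred0 // => i; apply/negbTE/andP => -[ir Pi].
  by move/hasP: Pr; apply; exists i.
by move: sum_le; rewrite !sum_nil; lra.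
Qed.

Lemma ln_nonpos y : y <= 0 -> ln y = 0.
Proof. by rewrite /ln; case: Rlt_dec => // y_gt0 y_le0; exfalso; lra. Qed.

Lemma ln_INR_ge0 p : 0 <= ln (INR p).
Proof.
case: p => [|p]; first by rewrite ln_nonpos /=; lra.
by rewrite -ln_1; apply: ln_le; rewrite ?S_INR; have := pos_INR p; lra.
Qed.

Lemma INR_expn m n : INR (m ^ n)%N = INR m ^ n.
Proof. by elim: n => [|n IH] //=; rewrite expnS mult_INR IH. Qed.

Definition theta (M : nat) : R := \big[Rplus/0]_(0 <= p < M | prime p) ln (INR p).

Lemma theta_mono a b : (a <= b)%N -> theta a <= theta b.
Proof.
move=> ab; rewrite /theta [X in _ <= X](big_cat_nat (leq0n a) ab) /=.
by have := @Rsum_ge0 nat (index_iota a b) prime _ (fun p _ => ln_INR_ge0 p); lra.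
Qed.

Lemma ln_le_nat m M : (m <= M)%N -> ln (INR m) <= ln (INR M).
Proof.
case: m => [|m] mM; first by rewrite ln_nonpos /=; [exact: ln_INR_ge0 | lra].
by apply: ln_le; [apply/lt_0_INR/ltP | apply/le_INR/leP].
Qed.

Lemma theta_le M : theta M <= INR M * ln (INR M).
Proof.
rewrite /theta big_nat_cond.
apply: Rle_trans (_ : \big[Rplus/0]_(0 <= p < M | (0 <= p < M)%N && prime p) ln (INR M) <= _).
  by apply: Rsum_le => p /andP[/andP[_ /ltnW pM] _]; apply: ln_le_nat.
rewrite -big_nat_cond Rsum_const_nat; apply: Rmult_le_compat_r; first exact: ln_INR_ge0.
apply/le_INR/leP; rewrite -[X in (_ <= X)%N]muln1 -[X in (X * 1)%N]subn0 -sum_nat_const_nat.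
by apply: leq_sum => p _; exact: leq_b1.
Qed.

Lemma ln_le_sub1 y : 0 < y -> ln y <= y - 1.
Proof.
move=> y_gt0; rewrite -[X in _ <= X]ln_exp; apply: ln_le => //.
by have := exp_ineq1_le (y - 1); lra.
Qed.

Lemma ln_le_four_root x : 0 < x -> ln x <= 4 * sqrt (sqrt x).
Proof.
move=> x_gt0; set s := sqrt (sqrt x).
have s_gt0 : 0 < s by apply/sqrt_lt_R0/sqrt_lt_R0.
have sx : sqrt x * sqrt x = x by apply: sqrt_sqrt; lra.
have ss : s * s = sqrt x by apply/sqrt_sqrt/sqrt_pos.
have -> : x = s ^ 4 by rewrite -{1}sx -ss; ring.
by rewrite ln_pow //; have := ln_le_sub1 s_gt0; simpl INR; lra.
Qed.

(* With [s = x^(1/4) >= 100]: [(s^2 + 1) 4 s <= s^4 / 20 - 1/2]. *)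
Lemma sqrt_succ_mul_ln_le x : 100000000 <= x -> (sqrt x + 1) * ln x <= x / 20 - 1 / 2.
Proof.
move=> x_large; set s := sqrt (sqrt x).
have s_large : 100 <= s.
  have -> : 100 = sqrt (sqrt 100000000).
    by rewrite (_ : 100000000 = (100 * 100) * (100 * 100)) ?sqrt_square; lra.
  by apply/sqrt_le_1_alt/sqrt_le_1_alt.
have s2 : s * s = sqrt x by rewrite sqrt_sqrt //; apply: sqrt_pos.
have s4 : x = (s * s) * (s * s) by rewrite s2 sqrt_sqrt; lra.
have := @ln_le_four_root x ltac:(lra); rewrite -/s -s2 s4 => ln_le_s.
have ln_ge0 : 0 <= ln ((s * s) * (s * s)) by rewrite -s4 -ln_1; apply: ln_le; lra.
have : 0 <= s * s * s * (s - 100) by apply: Rmult_le_pos; [nra | lra].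
nra.
Qed.

Lemma sqrt_lt_INR_sqrt_succ n : sqrt (INR n) < INR (Nat.sqrt n).+1.
Proof.
have [_ /leP lt] := Nat.sqrt_spec n (Nat.le_0_l _).
rewrite -[X in _ < X](sqrt_square (INR _)); last exact: pos_INR.
by apply: sqrt_lt_1_alt; split; [apply: pos_INR | rewrite -mult_INR; apply/lt_INR/ltP].
Qed.

Lemma INR_sqrt_succ_le n : INR (Nat.sqrt n).+1 <= sqrt (INR n) + 1.
Proof.
have [/leP le _] := Nat.sqrt_spec n (Nat.le_0_l _).
rewrite S_INR -(sqrt_square (INR (Nat.sqrt n))); last exact: pos_INR.
by apply/Rplus_le_compat_r/sqrt_le_1_alt; rewrite -mult_INR; apply/le_INR/leP.
Qed.

(* [p ^ v_p(C(2n,n)) <= 2n], and [v_p >= 2] forces [p < sqrt(2n) < T]. *)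
Lemma ln_pfactor_central_binomial_le n T p : (0 < n)%N -> (n.*2 < T * T)%N ->
  ln (INR (p ^ logn p 'C(n.*2, n))) <=
  (if prime p && (p < n.*2.+1)%N then ln (INR p) else 0) +
  (if (p < T)%N then ln (INR n.*2) else 0).
Proof.
move=> n_gt0 nT.
have [prime_part_ge0 small_part_ge0] : 0 <= (if prime p && (p < n.*2.+1)%N then ln (INR p) else 0) /\
                 0 <= (if (p < T)%N then ln (INR n.*2) else 0).
  by split; case: ifP => _; solve [exact: ln_INR_ge0 | lra].
have [p_prime | /negbTE pNprime] := boolP (prime p); last first.
  by rewrite lognE pNprime /= ln_1; lra.
rewrite p_prime /= in prime_part_ge0 *.
have := logn_central_binomial_le p_prime n_gt0.
case: (logn p _) => [|[|v]] pv_le; first by rewrite /= ln_1; lra.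
  by rewrite expn1 in pv_le *; rewrite ltnS pv_le; lra.
have p_lt_T : (p < T)%N.
  case: (ltnP p T) => // Tp; have : (T * T <= p ^ v.+2)%N.
    by apply: leq_trans (leq_mul Tp Tp) _; rewrite mulnn leq_exp2l // prime_gt1.
  lia.
by rewrite p_lt_T; have := ln_le_nat pv_le; lra.
Qed.

Lemma ln_central_binomial_le n T : (0 < n)%N -> (n.*2 < T * T)%N ->
  ln (INR 'C(n.*2, n)) <= theta n.*2.+1 + INR T * ln (INR n.*2).
Proof.
move=> n_gt0 nT; set C := 'C(n.*2, n); set L := ln (INR n.*2).
have C_gt0 : (0 < C)%N by rewrite bin_gt0 -addnn leq_addr.
have -> : ln (INR C) = \big[Rplus/0]_(0 <= p < C.+1) ln (INR (p ^ logn p C)).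
  by rewrite -{1}(partnT C_gt0) ln_prod // => p; exact: pfactor_gt0.
apply: Rle_trans (Rsum_le _ (fun p _ => ln_pfactor_central_binomial_le p n_gt0 nT)) _.
rewrite big_split /=; apply: Rplus_le_compat.
  apply: Rle_trans (@Rsum_nat_vanishing _ n.*2.+1 C.+1 _ _) _.
  - by move=> p; case: ifP => _; solve [exact: ln_INR_ge0 | lra].
  - by move=> p np; rewrite ltnNge np andbF.
  by apply: Req_le; rewrite /theta [RHS]big_mkcond; apply: eq_big_nat => p /andP[_ ->]; rewrite andbT.
apply: Rle_trans (@Rsum_nat_vanishing _ T C.+1 _ _) _.
- by move=> p; case: ifP => _; solve [exact: ln_INR_ge0 | lra].
- by move=> p Tp; rewrite ltnNge Tp.
rewrite (eq_big_nat _ _ (F2 := fun _ => L)) => [|p /andP[_ ->] //].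
by have := Rsum_const_nat xpredT L T; rewrite sum_nat_const_nat subn0 muln1 => ->; lra.
Qed.

Lemma theta_ge M : 100000000 <= INR M -> INR M / 5 <= theta M.
Proof.
move=> M_large; set x := INR M in M_large *.
have M_ge3 : (3 <= M)%N by apply/leP/INR_le; rewrite -/x /=; lra.
set n := (M.-1 %/ 2)%N; set T := (Nat.sqrt n.*2).+1.
have n_gt0 : (0 < n)%N by rewrite /n; lia.
have nM : (n.*2.+1 <= M)%N by rewrite /n; lia.
have x_le_n : (x - 2) / 2 <= INR n.
  have : (M <= n.*2 + 2)%N by rewrite /n; lia.
  by move/leP/le_INR; rewrite plus_INR -mul2n mult_INR /= -/x; lra.
have nT : (n.*2 < T * T)%N.
  by have [_ /ltP] := Nat.sqrt_spec n.*2 (Nat.le_0_l _); rewrite -/T.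
have binomial_lower : INR n * ln 2 <= ln (INR 'C(n.*2, n)).
  rewrite -ln_pow; last lra.
  apply: ln_le; first by apply: pow_lt; lra.
  by have /leP/le_INR := central_binomial_ge n; rewrite INR_expn.
have error_le : INR T * ln (INR n.*2) <= (sqrt x + 1) * ln x.
  apply: Rmult_le_compat; [exact: pos_INR | exact: ln_INR_ge0 | |].
    apply: Rle_trans (INR_sqrt_succ_le _) _; apply/Rplus_le_compat_r/sqrt_le_1_alt.
    by apply/le_INR/leP/ltnW.
  by apply/ln_le_nat/ltnW.
have := ln_central_binomial_le n_gt0 nT.
have : (x - 2) / 2 * / 2 <= INR n * ln 2.
  by apply: Rmult_le_compat; have := ln_lt_2; lra.
have := theta_mono nM; have := sqrt_succ_mul_ln_le M_large; lra.
Qed.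

Lemma continuous_eq0_right (f : R -> R) a :
  continuous f a -> (forall x, a < x -> f x = 0) -> f a = 0.
Proof.
move=> f_cont f_eq0; apply: cond_eq => eps eps_gt0.
have [d near_a] := proj1 (filterlim_locally f (f a)) f_cont (mkposreal _ eps_gt0).
have d_gt0 := cond_pos d.
have /near_a : ball a d (a + d / 2).
  by rewrite /ball /= /AbsRing_ball /abs /minus /plus /opp /= Rabs_right; lra.
rewrite (f_eq0 (a + d / 2)); last lra.
by rewrite /ball /= /AbsRing_ball /abs /minus /plus /opp /= Rplus_0_l Rabs_Ropp Rminus_0_r.
Qed.

Lemma cutoff_eq0_ge1 (chi : R -> R) :
  continuous chi 1 -> (forall x, chi x <> 0 -> x <= 1) -> forall y, 1 <= y -> chi y = 0.
Proof.
move=> chi_cont chi_supp.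
have chi_gt1 x : 1 < x -> chi x = 0.
  by move=> x_gt1; case: (Req_dec (chi x) 0) => // /chi_supp; lra.
move=> y [/chi_gt1 // | <-]; exact: continuous_eq0_right chi_cont chi_gt1.
Qed.

Lemma moebius1 : moebius 1 = 1.
Proof. by rewrite /moebius /squarefreeb (_ : primes 1 = [::]) //; apply/eqP; rewrite primes_eq0. Qed.

Lemma lambda_prime (chi : R -> R) alpha N m :
  (forall y, 1 <= y -> chi y = 0) -> prime m -> 1 < R_of alpha N -> R_of alpha N <= INR m ->
  lambda_ chi alpha N m = chi 0.
Proof.
move=> chi_eq0 m_prime R_gt1 R_le_m.
have divisors_m : perm_eq (divisors m) [:: 1%N; m].
  apply: uniq_perm; [exact: divisors_uniq | by rewrite /= inE andbT neq_ltn prime_gt1 |].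
  move=> d; rewrite -dvdn_divisors ?prime_gt0 // !inE.
  apply/idP/idP => [/(primeP m_prime).2 // | /orP[] /eqP ->]; [exact: dvd1n | exact: dvdnn].
have ln_R_gt0 : 0 < ln (R_of alpha N) by rewrite -ln_1; apply: ln_increasing; lra.
have ratio_ge1 : 1 <= ln (INR m) / ln (R_of alpha N).
  rewrite -(Rinv_r (ln (R_of alpha N))); last lra.
  by apply/Rmult_le_compat_r; [apply/Rlt_le/Rinv_0_lt_compat | apply: ln_le; lra].
rewrite /lambda_ (perm_big _ divisors_m) !big_cons big_nil moebius1 (chi_eq0 _ ratio_ge1) /=.
by rewrite ln_1 /Rdiv Rmult_0_l; ring.
Qed.

Lemma ln_R_of alpha N : ln (R_of alpha N) = alpha * ln (INR N).
Proof. by rewrite /R_of /Rpower ln_exp. Qed.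

Lemma phiW_over_W_bounds N : 0 <= phiW_over_W N <= 1.
Proof.
rewrite /phiW_over_W.
have W_gt0 : 0 < INR (W_of N) by apply/lt_0_INR/ltP/primorial_gt0.
have tot_ge0 := pos_INR (totient (W_of N)).
have tot_le : INR (totient (W_of N)) <= INR (W_of N) by apply/le_INR/leP/totient_le.
split; first exact: Rdiv_le_0_compat.
apply: (Rmult_le_reg_r (INR (W_of N))) => //.
by rewrite /Rdiv Rmult_assoc Rinv_l; lra.
Qed.

Lemma w_of_ge2 N : 2 <= ln (ln (INR N)) -> (2 <= w_of N)%N.
Proof.
move=> lnln_ge2; have [floor_le floor_gt] := base_Int_part (ln (ln (INR N))).
have : (1 < Int_part (ln (ln (INR N))))%Z by apply: lt_IZR; lra.
by rewrite /w_of; lia.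
Qed.

Lemma INR_w_of_le N : 1 <= ln (INR N) -> INR (w_of N) <= ln (ln (INR N)).
Proof.
move=> ln_ge1; have [floor_le floor_gt] := base_Int_part (ln (ln (INR N))).
have lnln_ge0 : 0 <= ln (ln (INR N)) by rewrite -ln_1; apply: ln_le; lra.
have floor_gt_m1 : (-1 < Int_part (ln (ln (INR N))))%Z by apply: lt_IZR; lra.
by rewrite /w_of INR_IZR_INZ Z2Nat.id //; lia.
Qed.

Lemma ln_W_of_le N : 1 <= ln (INR N) -> ln (INR (W_of N)) <= 4 * ln (INR N).
Proof.
move=> ln_ge1; set L := ln (INR N) in ln_ge1 *; set w := w_of N.
have w_le : INR w <= ln L by exact: INR_w_of_le.
have sqrtL_gt0 : 0 < sqrt L by apply: sqrt_lt_R0; lra.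
have sqrtL_sq : sqrt L * sqrt L = L by apply: sqrt_sqrt; lra.
have w1_le : INR w + 1 <= 2 * sqrt L.
  have := ln_le_sub1 sqrtL_gt0; rewrite -{1}sqrtL_sq ln_mult // in w_le; lra.
have w1_gt0 : 0 < INR w + 1 by have := pos_INR w; lra.
have W_le : INR (W_of N) <= (INR w + 1) ^ w.+1.
  by rewrite -S_INR -INR_expn; apply/le_INR/leP/primorial_le.
have W_gt0 : 0 < INR (W_of N) by apply/lt_0_INR/ltP/primorial_gt0.
apply: Rle_trans (ln_le _ _ W_gt0 W_le) _.
rewrite ln_pow // S_INR; have := ln_le_sub1 w1_gt0; nra.
Qed.

Definition prime_weight alpha N m : R :=
  if Rle_dec (R_of alpha N) (INR m) then
    (if prime m then phiW_over_W N * ln (INR m) else 0)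
  else 0.

Lemma f_bE alpha N b n : f_b alpha N b n = prime_weight alpha N (W_of N * n + b).
Proof. by []. Qed.

Lemma prime_weight_cases alpha N m :
  prime_weight alpha N m = 0 \/
  [/\ prime m, R_of alpha N <= INR m & prime_weight alpha N m = phiW_over_W N * ln (INR m)].
Proof. by rewrite /prime_weight; case: Rle_dec => R_le_m; [case: prime; [right | left] | left]. Qed.

Lemma prime_weight_ge0 alpha N m : 0 <= prime_weight alpha N m.
Proof.
case: (prime_weight_cases alpha N m) => [-> | [_ _ ->]]; first lra.
by apply: Rmult_le_pos; [case: (phiW_over_W_bounds N) | exact: ln_INR_ge0].
Qed.

Lemma sum_prime_weight_ge alpha N K M :
  (w_of N < K)%N -> R_of alpha N <= INR K -> (K <= M)%N ->
  phiW_over_W N * (theta M - theta K) <=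
  \big[Rplus/0]_(0 <= m < M | coprime m (W_of N)) prime_weight alpha N m.
Proof.
move=> wK R_le_K KM.
rewrite /theta [\big[_/_]_(0 <= _ < M | _) _](big_cat_nat (leq0n K) KM) /= Rplus_minus_l.
rewrite [X in _ <= X](big_cat_nat (leq0n K) KM) /=.
have := Rsum_ge0 (P := coprime^~ (W_of N)) (index_iota 0 K) (fun m _ => prime_weight_ge0 alpha N m).
suff -> : \big[Rplus/0]_(K <= m < M | coprime m (W_of N)) prime_weight alpha N m =
          phiW_over_W N * \big[Rplus/0]_(K <= p < M | prime p) ln (INR p) by lra.
rewrite (big_morph (Rmult _) (Rmult_plus_distr_l _) (Rmult_0_r _)) [LHS]big_mkcond [RHS]big_mkcond.
apply: eq_big_nat => m /andP[Km _]; rewrite /prime_weight.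
case m_prime: (prime m); last by case: ifP => _ //; case: Rle_dec.
rewrite coprime_primorial //; last exact: leq_trans Km.
by case: Rle_dec => // R_gt_m; exfalso; apply/R_gt_m/(Rle_trans _ _ _ R_le_K)/le_INR/leP.
Qed.

Section LargeModulus.

Variables (alpha : R) (N : nat).
Hypotheses (alpha_gt0 : 0 < alpha) (alpha_lt_half : alpha < 1 / 2).
Hypothesis N_large : 100000000 <= INR N.

Lemma ln_N_ge9 : 9 <= ln (INR N).
Proof.
have ln3_ge1 : 1 <= ln 3 by rewrite -{1}(ln_exp 1); apply: ln_le; [exact: exp_pos | exact: exp_le_3].
have : ln (3 ^ 9) <= ln (INR N) by apply: ln_le; [apply: pow_lt | simpl]; lra.
by rewrite ln_pow; [simpl INR; lra | lra].
Qed.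

Lemma lnln_N_ge2 : 2 <= ln (ln (INR N)).
Proof.
have ln3_ge1 : 1 <= ln 3 by rewrite -{1}(ln_exp 1); apply: ln_le; [exact: exp_pos | exact: exp_le_3].
have : ln (3 ^ 2) <= ln (ln (INR N)) by apply: ln_le; [apply: pow_lt | have := ln_N_ge9; simpl]; lra.
by rewrite ln_pow; [simpl INR; lra | lra].
Qed.

Lemma R_of_gt1 : 1 < R_of alpha N.
Proof.
rewrite /R_of /Rpower -exp_0; apply: exp_increasing.
by apply: Rmult_lt_0_compat => //; have := ln_N_ge9; lra.
Qed.

Lemma R_of_le_sqrt : R_of alpha N <= sqrt (INR N).
Proof. by rewrite /R_of -Rpower_sqrt; [apply: Rle_Rpower|]; lra. Qed.

Lemma W_of_ge2 : (2 <= W_of N)%N.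
Proof. exact/primorial_ge2/w_of_ge2/lnln_N_ge2. Qed.

Lemma ln_residue_le b n :
  (b < W_of N)%N -> (n < N)%N -> ln (INR (W_of N * n + b)) <= 5 * ln (INR N).
Proof.
move=> bW nN; have W_gt0 := primorial_gt0 (w_of N).
have /ln_le_nat : (W_of N * n + b <= W_of N * N)%N by nia.
rewrite mult_INR ln_mult; first by have := ln_W_of_le (N := N); have := ln_N_ge9; lra.
  exact/lt_0_INR/ltP.
by apply/lt_0_INR/ltP; lia.
Qed.

Lemma f_b_le_ln b n : (b < W_of N)%N -> (n < N)%N -> f_b alpha N b n <= 5 * ln (INR N).
Proof.
move=> bW nN; have := ln_N_ge9; rewrite f_bE.
case: (prime_weight_cases alpha N (W_of N * n + b)) => [-> | [_ _ ->]]; first lra.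
have [phi_ge0 phi_le1] := phiW_over_W_bounds N.
have := ln_residue_le bW nN; have := ln_INR_ge0 (W_of N * n + b); nra.
Qed.

(* Primes below [K] are discarded: they may lie below [R] or divide [W]. *)
Let K := (Nat.sqrt N).+1.

Lemma ln_N_le_sqrt : ln (INR N) <= sqrt (INR N).
Proof.
have := sqrt_succ_mul_ln_le N_large; have := ln_N_ge9.
have sq : sqrt (INR N) * sqrt (INR N) = INR N by apply: sqrt_sqrt; lra.
have : 0 <= sqrt (INR N) by exact: sqrt_pos.
nra.
Qed.

Lemma K_le_N : (K <= N)%N.
Proof.
apply/leP/INR_le; apply: Rle_trans (INR_sqrt_succ_le N) _.
by have := sqrt_succ_mul_ln_le N_large; have := ln_N_ge9; nra.
Qed.

Lemma theta_sieved_ge :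
  INR (W_of N) * (INR N / 10) <= theta (W_of N * N) - theta K.
Proof.
have W_ge1 : 1 <= INR (W_of N) by apply/(le_INR 1)/leP/primorial_gt0.
have K_le : INR K <= sqrt (INR N) + 1 := INR_sqrt_succ_le N.
have := theta_ge (M := W_of N * N); rewrite mult_INR => theta_WN.
have : theta K <= (sqrt (INR N) + 1) * ln (INR N).
  apply: Rle_trans (theta_le K) _.
  by apply: Rmult_le_compat; [exact: pos_INR | exact: ln_INR_ge0 | exact: K_le | exact: ln_le_nat K_le_N].
have := sqrt_succ_mul_ln_le N_large.
have := theta_WN ltac:(nra); nra.
Qed.

Lemma sum_residues_ge :
  \big[Rplus/0]_(0 <= b < W_of N | coprime b (W_of N)) (INR N / 10) <=
  \big[Rplus/0]_(0 <= b < W_of N | coprime b (W_of N)) \big[Rplus/0]_(0 <= n < N) f_b alpha N b n.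
Proof.
have W_gt0 : 0 < INR (W_of N) by apply/lt_0_INR/ltP/primorial_gt0.
under [X in _ <= X]eq_bigr do under eq_bigr do rewrite f_bE.
rewrite (big_coprime_residues _ _ _ (prime_weight alpha N)).
apply: Rle_trans (sum_prime_weight_ge (K := K) _ _ _) => //.
- rewrite Rsum_const_nat; apply: Rle_trans (Rmult_le_compat_l _ _ _ _ theta_sieved_ge).
  + apply: Req_le; rewrite /phiW_over_W totient_count_coprime.
    under [in RHS]eq_bigr do rewrite coprime_sym.
    by field; lra.
  + by case: (phiW_over_W_bounds N).
- apply/leP/INR_lt; apply: Rle_lt_trans (INR_w_of_le _) _; first by have := ln_N_ge9; lra.
  apply: Rle_lt_trans (sqrt_lt_INR_sqrt_succ N).
  have := ln_le_sub1 (y := ln (INR N)); have := ln_N_le_sqrt; have := ln_N_ge9; lra.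
- apply: Rle_trans R_of_le_sqrt (Rlt_le _ _ (sqrt_lt_INR_sqrt_succ N)).
- by apply: leq_trans K_le_N _; rewrite leq_pmull ?primorial_gt0.
Qed.

Lemma exists_dense_residue :
  exists b, [/\ (1 <= b)%N, (b < W_of N)%N, coprime b (W_of N) &
    1 / INR N * \big[Rplus/0]_(0 <= n < N) f_b alpha N b n >= 1 / 10].
Proof.
have has_coprime : has (coprime^~ (W_of N)) (index_iota 0 (W_of N)).
  by apply/hasP; exists 1%N; [rewrite mem_index_iota; have := W_of_ge2; lia | exact: coprime1n].
have [b /andP[bW b_coprime] dense] := exists_ge_of_Rsum_le has_coprime sum_residues_ge.
rewrite mem_index_iota in bW; case/andP: bW => _ bW.
exists b; split => //.
  by case: b b_coprime {dense bW} => // /eqP; rewrite gcd0n; have := W_of_ge2; lia.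
have inv_N_ge0 : 0 <= 1 / INR N by apply/Rlt_le/Rdiv_lt_0_compat; lra.
apply/Rle_ge/(Rle_trans _ _ _ _ (Rmult_le_compat_l _ _ _ inv_N_ge0 dense)).
by apply: Req_le; field; lra.
Qed.

Variable chi : R -> R.
Hypotheses (chi0_gt0 : 0 < chi 0) (chi_eq0 : forall y, 1 <= y -> chi y = 0).

Lemma f_b_le_nu b n : (b < W_of N)%N -> (n < N)%N ->
  f_b alpha N b n <= 5 / (alpha * chi 0 ^ 2) * nu_b chi alpha N b n.
Proof.
move=> bW nN; have [phi_ge0 _] := phiW_over_W_bounds N.
have chi0_sq_gt0 : 0 < chi 0 ^ 2 by apply: pow_lt.
have c_gt0 : 0 < 5 / (alpha * chi 0 ^ 2) by apply: Rdiv_lt_0_compat; [lra | nra].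
have ln_N_gt0 : 0 < ln (INR N) by have := ln_N_ge9; lra.
rewrite f_bE /nu_b ln_R_of.
case: (prime_weight_cases alpha N (W_of N * n + b)) => [-> | [m_prime R_le_m ->]].
  by apply/Rmult_le_pos/Rmult_le_pos/pow2_ge_0; [lra | apply: Rmult_le_pos; nra].
rewrite (lambda_prime chi_eq0 m_prime R_of_gt1 R_le_m).
have -> : 5 / (alpha * chi 0 ^ 2) * (phiW_over_W N * (alpha * ln (INR N)) * chi 0 ^ 2) =
          5 * (phiW_over_W N * ln (INR N)) by field; nra.
by have := ln_residue_le bW nN; nra.
Qed.

End LargeModulus.

Theorem mainTheorem13 :
  forall (chi : R -> R),
    (forall (k : nat) (x : R), ex_derive_n chi k x) ->
    (forall x : R, 0 <= chi x)%R ->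
    (forall x : R, chi x <> 0%R -> (-1 <= x <= 1)%R) ->
    (0 < chi 0)%R ->
    is_RInt_gen (fun x => (Derive chi x) ^ 2)%R (at_point 0%R) (Rbar_locally p_infty) 1%R ->
  forall alpha : R, (0 < alpha < 1 / 2)%R ->
  exists (delta c C : R) (N0 : nat),
    (0 < delta)%R /\ (0 < c)%R /\ (0 < C)%R /\
    forall N : nat, prime N -> (N0 <= N)%N ->
      (exists b : nat, (1 <= b)%N /\ (b < W_of N)%N /\ coprime b (W_of N) /\
         (1 / INR N * \big[Rplus/0%R]_(0 <= n < N) f_b alpha N b n >= delta)%R) /\
      (forall b : nat, (1 <= b)%N -> (b < W_of N)%N -> coprime b (W_of N) ->
         forall n : nat, (n < N)%N ->
           (0 <= f_b alpha N b n <= c * nu_b chi alpha N b n)%R /\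
           (f_b alpha N b n <= C * ln (INR N))%R).
Proof.
move=> chi chi_smooth _ chi_supp chi0_gt0 _ alpha [alpha_gt0 alpha_lt_half].
have chi_eq0 : forall y, 1 <= y -> chi y = 0.
  apply: cutoff_eq0_ge1 => [|x /chi_supp []//].
  exact/ex_derive_continuous/(chi_smooth 1%N).
have chi0_sq_gt0 : 0 < chi 0 ^ 2 by apply: pow_lt.
exists (1 / 10), (5 / (alpha * chi 0 ^ 2)), 5, (10 ^ 8)%N.
split; first lra.
split; first by apply: Rdiv_lt_0_compat; [lra | apply: Rmult_lt_0_compat].
split; first lra.
move=> N _ /leP/le_INR; rewrite INR_expn (_ : INR 10 = 10); last by simpl; lra.
move=> N_large; have {}N_large : 100000000 <= INR N by lra.
split.
  by have [b []] := exists_dense_residue alpha_gt0 alpha_lt_half N_large; exists b.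
move=> b _ bW _ n nN; rewrite f_bE; split; [split|].
- exact: prime_weight_ge0.
- exact: f_b_le_nu.
- exact: f_b_le_ln.
Qed.
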